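(* Let $Q\in\mathbb{R}^{n\times n}$ be symmetric positive definite and let $\mathcal{E}=\{x\in\mathbb{R}^n : x^TQx\le 1\}$. Let $f_d:\mathbb{R}^n\to\mathbb{R}^n$ be continuously differentiable and consider the discrete system $x_{k+1}=f_d(x_k)$. Assume that the function $x\mapsto f_d(x)^TQf_d(x)$ is concave on $\mathbb{R}^n$. Then $\mathcal{E}$ is an invariant set for this discrete system if and only if there exists $\beta\ge 0$ such that $$\beta x^TQx-f_d(x)^TQf_d(x)\ge \beta-1\quad\text{for all } x\in\mathbb{R}^n.$$
   Context: A set $\mathcal{S}\subseteq\mathbb{R}^n$ is an invariant set for the discrete system $x_{k+1}=f_d(x_k)$ if $x_k\in\mathcal{S}$ implies $x_{k+1}\in\mathcal{S}$ for all $k\in\mathbb{N}$. *)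

From HB Require Import structures.
From mathcomp Require Import all_boot all_order all_algebra.
From mathcomp Require Import all_classical all_reals all_analysis.
Set Implicit Arguments. Unset Strict Implicit. Unset Printing Implicit Defensive.
Import Order.TTheory GRing.Theory Num.Theory.
Import numFieldNormedType.Exports.
Local Open Scope ring_scope.
Local Open Scope classical_set_scope.

(* Vectors of R^n are row vectors 'rV[R]_n; x^T Q x is written
   (x *m Q *m x^T) 0 0. *)
Definition quad {R : realType} {n : nat} (Q : 'M[R]_n) (x : 'rV[R]_n) : R :=
  (x *m Q *m x^T) 0 0.

Definition sym_posdef {R : realType} {n : nat} (Q : 'M[R]_n) : Prop :=
  Q^T = Q /\ forall x : 'rV[R]_n, x != 0 -> 0 < quad Q x.

Definition ellipsoid {R : realType} {n : nat} (Q : 'M[R]_n) : set 'rV[R]_n :=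
  [set x | quad Q x <= 1].

Definition C1 {R : realType} {n : nat} (f : 'rV[R]_n -> 'rV[R]_n) : Prop :=
  (forall x, differentiable f x) /\
  continuous (fun x : 'rV[R]_n => lin1_mx ('d f x : 'rV[R]_n -> 'rV[R]_n)).

Definition concave_on_Rn {R : realType} {n : nat} (g : 'rV[R]_n -> R) : Prop :=
  forall (t : R) (x y : 'rV[R]_n), 0 <= t <= 1 ->
    t * g x + (1 - t) * g y <= g (t *: x + (1 - t) *: y).

Definition invariant_set {R : realType} {n : nat}
    (fd : 'rV[R]_n -> 'rV[R]_n) (S : set 'rV[R]_n) : Prop :=
  forall xs : nat -> 'rV[R]_n, (forall k, xs k.+1 = fd (xs k)) ->
    forall k, S (xs k) -> S (xs k.+1).

From HB Require Import structures.
From mathcomp Require Import all_boot all_order all_algebra.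
From mathcomp Require Import all_classical all_reals all_analysis.
From mathcomp Require Import ring lra.
Import Order.TTheory GRing.Theory Num.Theory.
Import numFieldNormedType.Exports.
Local Open Scope ring_scope.
Local Open Scope classical_set_scope.

(* Invariance of E means g := q o fd is at most 1 on {q <= 1}, where
   q x = x^T Q x.  For q x < 1 < q y the segment [x, y] crosses the level set
   {q = 1} at some z = t x + (1 - t) y; convexity of q puts z in E, so
   g z <= 1, and concavity of g gives t g x + (1 - t) g y <= 1.  Eliminating t,
   every slope (g y - 1) / (q y - 1) over {q > 1} is bounded by every slope
   (1 - g x) / (1 - q x) over {q < 1}, and beta can be taken between the two
   families (the latter is nonempty since q 0 = 0). *)

Lemma invariant_setP (R : realType) (n : nat) (fd : 'rV[R]_n -> 'rV[R]_n)
    (S : set 'rV[R]_n) :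
  invariant_set fd S <-> forall x, S x -> S (fd x).
Proof.
split=> [inv x Sx | fdS xs xsS k]; last by rewrite xsS; apply: fdS.
exact: (inv (fun k => iter k fd x) (fun=> erefl) 0%N).
Qed.

Section QuadraticForm.
Context {R : realType} {n : nat} (Q : 'M[R]_n).

Definition bform (x y : 'rV[R]_n) : R := (x *m Q *m y^T) 0 0.

Lemma bformC : Q^T = Q -> forall x y, bform x y = bform y x.
Proof.
move=> symQ x y; have trmx11 (M : 'M[R]_1) : M^T 0 0 = M 0 0 by rewrite mxE.
by rewrite /bform -[RHS]trmx11 !trmx_mul trmxK symQ mulmxA.
Qed.

Lemma bformDl x y z : bform (x + y) z = bform x z + bform y z.
Proof. by rewrite /bform !mulmxDl mxE. Qed.

Lemma bformDr x y z : bform z (x + y) = bform z x + bform z y.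
Proof. by rewrite /bform linearD /= !mulmxDr mxE. Qed.

Lemma bformZl a x y : bform (a *: x) y = a * bform x y.
Proof. by rewrite /bform -!scalemxAl mxE. Qed.

Lemma bformZr a x y : bform x (a *: y) = a * bform x y.
Proof. by rewrite /bform linearZ /= -!scalemxAr mxE. Qed.

Lemma quad0 : quad Q 0 = 0.
Proof. by rewrite /quad !mul0mx mxE. Qed.

Lemma quad_ge0 : sym_posdef Q -> forall x, 0 <= quad Q x.
Proof.
move=> [_ posQ] x; have [->|x_neq0] := eqVneq x 0; first by rewrite quad0.
exact/ltW/posQ.
Qed.

Lemma quad_convex : sym_posdef Q -> forall (t : R) x y, 0 <= t <= 1 ->
  quad Q (t *: x + (1 - t) *: y) <= t * quad Q x + (1 - t) * quad Q y.
Proof.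
move=> posdefQ t x y /andP[t_ge0 t_le1].
have t1_ge0 : 0 <= 1 - t by rewrite subr_ge0.
have := mulr_ge0 (mulr_ge0 t_ge0 t1_ge0) (quad_ge0 posdefQ (x - y)).
have quadE z : quad Q z = bform z z by [].
rewrite !quadE -(scaleN1r y) !bformDl !bformDr !bformZl !bformZr.
by rewrite (bformC posdefQ.1 y x); nra.
Qed.

End QuadraticForm.

Section SublevelInclusion.
Context {R : realType} {V : lmodType R} {q g : V -> R}.

Hypothesis q_convex : forall (t : R) x y, 0 <= t <= 1 ->
  q (t *: x + (1 - t) *: y) <= t * q x + (1 - t) * q y.
Hypothesis g_concave : forall (t : R) x y, 0 <= t <= 1 ->
  t * g x + (1 - t) * g y <= g (t *: x + (1 - t) *: y).
Hypothesis g_le1 : forall x, q x <= 1 -> g x <= 1.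

Lemma sublevel_slope_le x y : q x < 1 -> 1 < q y ->
  (g y - 1) * (1 - q x) <= (1 - g x) * (q y - 1).
Proof.
move=> qx_lt1 qy_gt1; have dq_gt0 : 0 < q y - q x by lra.
pose t := (q y - 1) / (q y - q x).
have t_dq : t * (q y - q x) = q y - 1 by rewrite mulfVK ?gt_eqF.
have t01 : 0 <= t <= 1.
  by rewrite divr_ge0 ?ler_pdivrMr ?mul1r /=; lra.
have qz_le1 : q (t *: x + (1 - t) *: y) <= 1.
  apply: le_trans (q_convex t x y t01) _; nra.
have := le_trans (g_concave t x y t01) (g_le1 _ qz_le1).
have t1_dq : (1 - t) * (q y - q x) = 1 - q x by rewrite mulrBl mul1r t_dq; lra.
move/(ler_wpM2r (ltW dq_gt0)); rewrite mul1r.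
have -> : (t * g x + (1 - t) * g y) * (q y - q x)
    = g x * (t * (q y - q x)) + g y * ((1 - t) * (q y - q x)) by ring.
rewrite t_dq t1_dq; nra.
Qed.

Lemma sublevel_multiplier x0 : q x0 < 1 ->
  exists beta : R, 0 <= beta /\ forall x, g x - 1 <= beta * (q x - 1).
Proof.
move=> qx0_lt1.
pose slopes := [set (g y - 1) / (q y - 1) | y in [set y | 1 < q y]].
have slopes_le x r : q x < 1 -> slopes r -> r * (1 - q x) <= 1 - g x.
  move=> qx_lt1 [y /= qy_gt1 <-].
  by rewrite mulrAC ler_pdivrMr ?subr_gt0 //; exact: sublevel_slope_le.
have slopes_ub : has_ubound slopes.
  exists ((1 - g x0) / (1 - q x0)) => r /(slopes_le _ _ qx0_lt1).
  by rewrite ler_pdivlMr ?subr_gt0.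
exists (Num.max 0 (sup slopes)); split=> [|x]; first by rewrite le_max lexx.
have [qx_lt1|qx_gt1|qx_eq1] := ltgtP (q x) 1.
- have gx_le1 : g x <= 1 by apply/g_le1/ltW.
  suff : Num.max 0 (sup slopes) <= (1 - g x) / (1 - q x).
    by rewrite ler_pdivlMr ?subr_gt0 //; lra.
  rewrite ge_max divr_ge0 ?subr_ge0 ?(ltW qx_lt1) //=.
  have [->|/set0P slopes_neq0] := eqVneq slopes set0.
    by rewrite sup0 divr_ge0 ?subr_ge0 // ltW.
  by apply: ge_sup => // r /(slopes_le _ _ qx_lt1); rewrite ler_pdivlMr ?subr_gt0.
- rewrite -ler_pdivrMr ?subr_gt0 // le_max; apply/orP; right.
  by apply: sup_upper_bound; [split; [exists ((g x - 1) / (q x - 1)), x|] | exists x].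
- by rewrite qx_eq1 subrr mulr0 subr_le0 g_le1 ?qx_eq1.
Qed.

End SublevelInclusion.

Theorem theorem5 (R : realType) (n : nat) (Q : 'M[R]_n)
    (fd : 'rV[R]_n -> 'rV[R]_n) :
  sym_posdef Q -> C1 fd -> concave_on_Rn (fun x => quad Q (fd x)) ->
  (invariant_set fd (ellipsoid Q) <->
   exists beta : R, 0 <= beta /\
     forall x : 'rV[R]_n, beta * quad Q x - quad Q (fd x) >= beta - 1).
Proof.
move=> posdefQ _ concave_g; rewrite invariant_setP; split.
- move=> inv; have [|beta [beta_ge0 ineq]] :=
    @sublevel_multiplier _ _ (quad Q) (fun x => quad Q (fd x))
      (quad_convex Q posdefQ) concave_g inv 0.
    by rewrite quad0.
  by exists beta; split=> // x; have := ineq x; lra.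
- move=> [beta [beta_ge0 ineq]] x qx_le1; have := ineq x.
  have : beta * quad Q x <= beta * 1 by rewrite ler_wpM2l.
  rewrite /ellipsoid /=; lra.
Qed.
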